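(* Let $(S,\|\cdot\|)$ be a complete $RN$ module over $K$ with base $(\Omega,\mathcal F,P)$, and let $A:D(A)\subset S\to S$ be a module homomorphism with $L^{0}_{++}(\mathcal F)\subset\rho(A)$. If there exists $M\in L^{0}_{+}(\mathcal F)$ with $M\geq1$ such that $\|\xi^{n}R(\xi,A)^{n}\|\leq M$ for any $n\in N$ and $\xi\in L^{0}_{++}(\mathcal F)$, then there exists an $L^{0}$-norm $|\cdot|$ on $S$ which is equivalent to $\|\cdot\|$ and satisfies $\|x\|\leq|x|\leq M\|x\|$ for any $x\in S$, and $|\xi R(\xi,A)x|\leq|x|$ for any $x\in S$ and $\xi\in L^{0}_{++}(\mathcal F)$.
   Context: $(\Omega,\mathcal F,P)$ is a probability space; $L^{0}(\mathcal F,K)$ ($K=R$ or $C$) is the algebra of equivalence classes of $K$-valued $\mathcal F$-measurable random variables, ordered a.s.; $L^{0}_{+}(\mathcal F)=\{\xi\in L^0(\mathcal F,R):\xi\ge 0\}$, $L^{0}_{++}(\mathcal F)=\{\xi\in L^0(\mathcal F,R):\xi>0\text{ a.s.}\}$. An $RN$ module over $K$ with base $(\Omega,\mathcal F,P)$ is a left $L^0(\mathcal F,K)$-module $S$ with a map $\|\cdot\|:S\to L^0_+(\mathcal F)$ (an $L^0$-norm) such that $\|\xi x\|=|\xi|\|x\|$, $\|x+y\|\le\|x\|+\|y\|$, $\|x\|=0\Rightarrow x=0$; it carries the $(\varepsilon,\lambda)$-topology ($x_n\to x$ iff $\|x_n-x\|\to0$ in probability); completeness refers to this topology. Two $L^0$-norms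 are equivalent if they induce the same $(\varepsilon,\lambda)$-topology. $B(S)$ is the set of continuous module homomorphisms $S\to S$, with $\|T\|=\bigwedge\{\xi\in L^0_+(\mathcal F):\|Tx\|\le\xi\|x\|\ \forall x\}$. $\rho(A)=\{\xi\in L^0(\mathcal F,K):\xi I-A:D(A)\to S\text{ is bijective and }(\xi I-A)^{-1}\in B(S)\}$, $R(\xi,A)=(\xi I-A)^{-1}$. *)

From HB Require Import structures.
From mathcomp Require Import all_boot all_order all_algebra.
From mathcomp Require Import all_classical all_reals all_analysis.
From mathcomp Require Import complex.

Set Implicit Arguments.
Unset Strict Implicit.
Unset Printing Implicit Defensive.

Import Order.TTheory GRing.Theory Num.Theory.
Local Open Scope classical_set_scope.
Local Open Scope ring_scope.

(** The scalar field K is R or C = R[i]. *)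
Inductive kind := RealK | ComplexK.

Definition Kt (R : realType) (k : kind) : numFieldType :=
  match k with RealK => R | ComplexK => R[i] end.

Definition kofR (R : realType) (k : kind) : R -> Kt R k :=
  match k return R -> Kt R k with
  | RealK => fun r => r
  | ComplexK => fun r => (r%:C)%C end.

Definition kabs (R : realType) (k : kind) : Kt R k -> R :=
  match k return Kt R k -> R with
  | RealK => fun r => `|r|
  | ComplexK => fun z => Num.sqrt (complex.Re z ^+ 2 + complex.Im z ^+ 2) end.

Section L0.
Context (R : realType) (k : kind) (d : measure_display) (Om : measurableType d)
  (P : probability Om R).

Definition ae (Q : Om -> Prop) : Prop := {ae P, forall w, Q w}.

(** representatives of elements of L^0(F,K), L^0(F,R), L^0_+(F), L^0_++(F) *)
Definition L0 (f : Om -> Kt R k) : Prop :=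
  match k return (Om -> Kt R k) -> Prop with
  | RealK => fun f => measurable_fun setT f
  | ComplexK => fun f => measurable_fun setT (fun w => complex.Re (f w)) /\
                         measurable_fun setT (fun w => complex.Im (f w)) end f.
Definition L0R (f : Om -> R) : Prop := measurable_fun setT f.
Definition L0plus (f : Om -> R) : Prop := L0R f /\ ae (fun w => 0 <= f w).
Definition L0pp (f : Om -> R) : Prop := L0R f /\ ae (fun w => 0 < f w).

Definition kc (f : Om -> R) : Om -> Kt R k := fun w => kofR k (f w).

Context (S : zmodType) (smul : (Om -> Kt R k) -> S -> S).

(** S is a left L^0(F,K)-module (smul is well defined on a.s.-classes) *)
Record is_L0module : Prop := {
  sm_wd : forall xi eta x, L0 xi -> L0 eta -> ae (fun w => xi w = eta w) ->
    smul xi x = smul eta x;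
  sm_addr : forall xi x y, L0 xi -> smul xi (x + y) = smul xi x + smul xi y;
  sm_addl : forall xi eta x, L0 xi -> L0 eta ->
    smul (fun w => xi w + eta w) x = smul xi x + smul eta x;
  sm_mul : forall xi eta x, L0 xi -> L0 eta ->
    smul (fun w => xi w * eta w) x = smul xi (smul eta x);
  sm_one : forall x, smul (fun _ => 1) x = x }.

Record is_L0norm (nrm : S -> Om -> R) : Prop := {
  nrm_L0 : forall x, L0plus (nrm x);
  nrm_hom : forall xi x, L0 xi ->
    ae (fun w => nrm (smul xi x) w = kabs (xi w) * nrm x w);
  nrm_tri : forall x y, ae (fun w => nrm (x + y) w <= nrm x w + nrm y w);
  nrm_def : forall x, ae (fun w => nrm x w = 0) -> x = 0 }.

Definition is_RN_module (nrm : S -> Om -> R) : Prop :=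
  is_L0module /\ is_L0norm nrm.

Definition el_nbhd (nrm : S -> Om -> R) (x : S) (eps lam : R) : set S :=
  [set y | ((1 - lam)%:E < P [set w | (nrm (y - x) w < eps)%R])%E].

Definition el_open (nrm : S -> Om -> R) (U : set S) : Prop :=
  forall x, U x -> exists eps lam : R,
    [/\ 0 < eps, 0 < lam, lam < 1 & el_nbhd nrm x eps lam `<=` U].

Definition equiv_norms (nrm1 nrm2 : S -> Om -> R) : Prop :=
  forall U, el_open nrm1 U <-> el_open nrm2 U.

Definition el_cauchy (nrm : S -> Om -> R) (u : nat -> S) : Prop :=
  forall eps lam : R, 0 < eps -> 0 < lam -> exists N : nat,
    forall m n : nat, (N <= m)%N -> (N <= n)%N ->
      (P [set w | (eps <= nrm (u n - u m) w)%R] < lam%:E)%E.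

Definition el_cvg (nrm : S -> Om -> R) (u : nat -> S) (x : S) : Prop :=
  forall eps lam : R, 0 < eps -> 0 < lam -> exists N : nat,
    forall n : nat, (N <= n)%N ->
      (P [set w | (eps <= nrm (u n - x) w)%R] < lam%:E)%E.

(** completeness w.r.t. the (metrizable) (eps,lambda)-topology *)
Definition el_complete (nrm : S -> Om -> R) : Prop :=
  forall u, el_cauchy nrm u -> exists x, el_cvg nrm u x.

Definition el_continuous (nrm : S -> Om -> R) (T : S -> S) : Prop :=
  forall U, el_open nrm U -> el_open nrm (T @^-1` U).

Definition is_modhom (T : S -> S) : Prop :=
  (forall x y, T (x + y) = T x + T y) /\
  (forall xi x, L0 xi -> T (smul xi x) = smul xi (T x)).

Definition inB (nrm : S -> Om -> R) (T : S -> S) : Prop :=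
  is_modhom T /\ el_continuous nrm T.

Definition is_partial_modhom (D : set S) (A : S -> S) : Prop :=
  [/\ D 0, (forall x y, D x -> D y -> D (x + y)),
      (forall xi x, L0 xi -> D x -> D (smul xi x)),
      (forall x y, D x -> D y -> A (x + y) = A x + A y) &
      (forall xi x, L0 xi -> D x -> A (smul xi x) = smul xi (A x))].

(** Rx is (xi I - A)^{-1} and belongs to B(S): i.e. xi in rho(A) and Rx = R(xi,A) *)
Definition is_resolvent (nrm : S -> Om -> R) (D : set S) (A : S -> S)
    (xi : Om -> Kt R k) (Rx : S -> S) : Prop :=
  [/\ inB nrm Rx,
      (forall y, D (Rx y) /\ smul xi (Rx y) - A (Rx y) = y) &
      (forall x, D x -> Rx (smul xi x - A x) = x)].

Definition is_opbound (nrm : S -> Om -> R) (T : S -> S) (xi : Om -> R) : Prop :=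
  L0plus xi /\ forall x, ae (fun w => nrm (T x) w <= xi w * nrm x w).

Definition is_opnorm (nrm : S -> Om -> R) (T : S -> S) (N : Om -> R) : Prop :=
  [/\ L0plus N,
      (forall xi, is_opbound nrm T xi -> ae (fun w => N w <= xi w)) &
      (forall eta, L0R eta ->
         (forall xi, is_opbound nrm T xi -> ae (fun w => eta w <= xi w)) ->
         ae (fun w => eta w <= N w))].

End L0.

From HB Require Import structures.
From mathcomp Require Import all_boot all_order all_algebra.
From mathcomp Require Import all_classical all_reals all_analysis.
From mathcomp Require Import complex measurable_realfun lra.

Set Implicit Arguments.
Unset Strict Implicit.
Unset Printing Implicit Defensive.

Import Order.TTheory GRing.Theory Num.Theory.
Local Open Scope classical_set_scope.
Local Open Scope ring_scope.

(* Pazy's renorming.  For a fixed level mu = m + 1 put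
   |y|_m = sup_n ||mu^n R(mu)^n y||; the hypothesis gives
   ||y|| <= |y|_m <= M ||y||, and mu R(mu) is a |.|_m-contraction.  By the
   resolvent identity, l R(l) y is the convex combination with weight l / mu
   of mu R(mu) y and mu R(mu) (l R(l) y), so l R(l) is a |.|_m-contraction for
   every 0 < l <= mu; in particular |.|_m increases with m, and
   |y| = sup_m |y|_m is the new norm.  For a random xi, on the event
   {xi <= m + 1} the resolvent R(xi) agrees with R(min(xi, m + 1)), which
   reduces contractivity to the bounded case.  Since M is a.s. finite, the
   bounds ||.|| <= |.| <= M ||.|| give the same (eps, lambda)-topology. *)

Section Scalars.
Context (R : realType) (k : kind).

Lemma kofRD (a b : R) : kofR k (a + b) = kofR k a + kofR k b.
Proof. by case: k => //=; rewrite rmorphD. Qed.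

Lemma kofRM (a b : R) : kofR k (a * b) = kofR k a * kofR k b.
Proof. by case: k => //=; rewrite rmorphM. Qed.

Lemma kofR1 : kofR k (1 : R) = 1.
Proof. by case: k => //=; rewrite rmorph1. Qed.

Lemma kabs_kofR (a : R) : kabs (kofR k a) = `|a|.
Proof. by case: k => //=; rewrite expr0n addr0 /= sqrtr_sqr. Qed.

Lemma kabs_ge0 (z : Kt R k) : 0 <= kabs z.
Proof. by case: k z => //= z; rewrite sqrtr_ge0. Qed.

End Scalars.

Lemma measurable_inv (R : realType) : measurable_fun setT (GRing.inv : R -> R).
Proof.
have -> : [set: R] = ~` [set 0] `|` [set 0].
  by apply/seteqP; split => x //= _; case: (pselect (x = 0)) => h; [right|left].
apply/measurable_funU => //; first exact: measurableC.
split.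
  apply: open_continuous_measurable_fun; first by rewrite openC; exact: closed_eq.
  by move=> x; rewrite inE /= => /eqP x0; exact: inv_continuous.
move=> _ Y mY; case: (pselect (Y (0^-1 : R))) => h.
  by rewrite (_ : _ `&` _ = [set 0]) //; apply/seteqP; split => x /=; [case|move=> ->].
by rewrite (_ : _ `&` _ = set0) //; apply/seteqP; split => x //=; case=> ->.
Qed.

Section AlmostSure.
Context (R : realType) (d : measure_display) (Om : measurableType d)
  (P : probability Om R).
Local Notation mble f := (measurable_fun setT f).
Implicit Types (Q : Om -> Prop) (f : Om -> R).

Lemma ae_mono Q Q' : ae P Q -> (forall w, Q w -> Q' w) -> ae P Q'.
Proof. by move=> HQ QQ'; move: HQ; rewrite /ae; apply: filterS. Qed.

Lemma ae_and Q1 Q2 : ae P Q1 -> ae P Q2 -> ae P (fun w => Q1 w /\ Q2 w).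
Proof. by rewrite /ae; apply: filterS2. Qed.

Lemma ae_of_all Q : (forall w, Q w) -> ae P Q.
Proof. exact: aeW. Qed.

Lemma ae_forall_nat (Q : nat -> Om -> Prop) :
  (forall n, ae P (Q n)) -> ae P (fun w => forall n, Q n w).
Proof. exact: ae_foralln. Qed.

Lemma not_ae_False : ~ ae P (fun _ => False).
Proof.
case=> N [mN PN0 sN]; have : P setT = 0%E.
  by apply/eqP; rewrite -measure_le0 -PN0 le_measure ?inE // => w _; exact: sN.
by rewrite probability_setT => /eqP; rewrite onee_eq0.
Qed.

Lemma le_measure_ae (B C : set Om) : measurable B -> measurable C ->
  ae P (fun w => B w -> C w) -> (P B <= P C)%E.
Proof.
move=> mB mC [N [mN PN0 sN]].
have BCN : B `<=` C `|` N.
  by move=> w Bw; case: (pselect (C w)) => h; [left|right; apply: sN => /(_ Bw)].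
apply: (le_trans (le_measure _ _ _ BCN)); rewrite ?inE //; first exact: measurableU.
by apply: (le_trans (measureU2 _ _ _)) => //; rewrite [X in (_ + X)%E]PN0 adde0.
Qed.

Lemma fineK_prob (B : set Om) : measurable B -> P B = (fine (P B))%:E.
Proof. by move=> mB; rewrite fineK // fin_num_measure. Qed.

Lemma measurable_lt_set f c : mble f -> measurable [set w | f w < c].
Proof.
move=> mf; rewrite -[X in measurable X]setTI.
suff -> : [set w | f w < c] = f @^-1` `]-oo, c[ by exact: mf.
by apply/seteqP; split => w /=; rewrite in_itv.
Qed.

Lemma measurable_gt_set f c : mble f -> measurable [set w | c < f w].
Proof.
move=> mf; rewrite -[X in measurable X]setTI.
suff -> : [set w | c < f w] = f @^-1` `]c, +oo[ by exact: mf.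
by apply/seteqP; split => w /=; rewrite in_itv /= andbT.
Qed.

Lemma measurable_le_set f c : mble f -> measurable [set w | f w <= c].
Proof.
move=> mf; rewrite -[X in measurable X]setTI.
suff -> : [set w | f w <= c] = f @^-1` `]-oo, c] by exact: mf.
by apply/seteqP; split => w /=; rewrite in_itv.
Qed.

Lemma prob_gt_nat_small f (lam : R) : mble f -> 0 < lam ->
  exists n : nat, fine (P [set w | n%:R < f w]) < lam.
Proof.
move=> mf lam0; pose F n := [set w | n%:R < f w].
have mF n : measurable (F n) by exact: measurable_gt_set.
have F0 : \bigcap_n F n = set0.
  apply/seteqP; split => w // /(_ (Num.truncn (f w)).+1 I); rewrite /F /=.
  by move=> /ltW; apply/negP; rewrite -ltNge truncnS_gt.
have : (P \o F) n @[n --> \oo] --> P (\bigcap_n F n).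
  apply: nonincreasing_cvg_mu => //.
  - by rewrite (le_lt_trans (probability_le1 _ (mF 0%N))) // ltry.
  - exact: bigcapT_measurable.
  - by move=> n m nm; apply/subsetPset => w; apply: le_lt_trans; rewrite ler_nat.
rewrite F0 measure0 => /fine_cvg/cvgr_lt/(_ lam lam0) [N _ HN].
by exists N; exact: (HN N (leqnn N)).
Qed.

End AlmostSure.

Section NormComparison.
Context (R : realType) (d : measure_display) (Om : measurableType d)
  (P : probability Om R) (S : zmodType).
Local Notation mble f := (measurable_fun setT f).
Implicit Types (U : set S).

Lemma el_open_le (n1 n2 : S -> Om -> R) U :
  (forall x, mble (n1 x)) -> (forall x, mble (n2 x)) ->
  (forall x, ae P (fun w => n1 x w <= n2 x w)) -> el_open P n1 U -> el_open P n2 U.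
Proof.
move=> m1 m2 le12 HU x /HU [eps [lam [e0 l0 l1 sub]]].
exists eps, lam; split => // y Hy; apply: sub; rewrite /el_nbhd /= in Hy *.
apply: (lt_le_trans Hy); apply: le_measure_ae; [exact: measurable_lt_set..|].
by apply: (ae_mono (le12 (y - x))) => w; apply: le_lt_trans.
Qed.

Lemma el_open_le_mul (n1 n2 : S -> Om -> R) (M : Om -> R) U :
  (forall x, mble (n1 x)) -> (forall x, mble (n2 x)) -> mble M ->
  (forall x, ae P (fun w => 0 <= n1 x w)) ->
  (forall x, ae P (fun w => n2 x w <= M w * n1 x w)) ->
  el_open P n2 U -> el_open P n1 U.
Proof.
move=> m1 m2 mM n1_ge0 le21 HU x /HU [eps [lam [e0 l0 l1 sub]]].
have [K HK] := prob_gt_nat_small P mM (divr_gt0 l0 (ltr0Sn _ 1)).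
set K1 : R := K.+1%:R; have K1_gt0 : 0 < K1 by rewrite ltr0n.
exists (eps / K1), (lam / 2); split; rewrite ?divr_gt0 //.
  by rewrite ltr_pdivrMr // mul1r; apply: (lt_trans l1); rewrite ltr1n.
move=> y Hy; apply: sub; rewrite /el_nbhd /= in Hy *.
set E1 := [set w | n1 (y - x) w < eps / K1] in Hy.
set E2 := [set w | n2 (y - x) w < eps].
set G := [set w | K%:R < M w] in HK.
have mE1 : measurable E1 by exact: measurable_lt_set.
have mE2 : measurable E2 by exact: measurable_lt_set.
have mG : measurable G by exact: measurable_gt_set.
(* Off the small event [G], [n1 < eps / K.+1] forces [n2 < eps]. *)
have E1_sub : (P E1 <= P E2 + P G)%E.
  apply: (le_trans _ (measureU2 _ mE2 mG)).
  apply: le_measure_ae => //; first exact: measurableU.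
  apply: (ae_mono (ae_and (le21 (y - x)) (n1_ge0 (y - x)))) => w [le_w ge0_w] E1w.
  case: (pselect (G w)) => [|/negP]; [by right|rewrite -leNgt => MK; left].
  apply: (le_lt_trans le_w); apply: (le_lt_trans (y := K1 * n1 (y - x) w)).
    by apply: ler_wpM2r => //; apply: (le_trans MK); rewrite ler_nat.
  by rewrite -ltr_pdivlMl // mulrC.
move: Hy E1_sub; rewrite (fineK_prob P mE1) (fineK_prob P mE2) (fineK_prob P mG).
by rewrite -EFinD !lte_fin lee_fin; move: HK; lra.
Qed.

Lemma equiv_norms_le_mul (n1 n2 : S -> Om -> R) (M : Om -> R) :
  (forall x, mble (n1 x)) -> (forall x, mble (n2 x)) -> mble M ->
  (forall x, ae P (fun w => 0 <= n1 x w)) ->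
  (forall x, ae P (fun w => n1 x w <= n2 x w <= M w * n1 x w)) ->
  equiv_norms P n1 n2.
Proof.
move=> m1 m2 mM n1_ge0 bnd U; split.
  by apply: el_open_le => // x; apply: (ae_mono (bnd x)) => w /andP[].
by apply: (el_open_le_mul m1 m2 mM n1_ge0) => x; apply: (ae_mono (bnd x)) => w /andP[].
Qed.

End NormComparison.

Section Module.
Context (R : realType) {k : kind} (d : measure_display) (Om : measurableType d)
  (P : probability Om R) (S : zmodType) (smul : (Om -> Kt R k) -> S -> S).
Hypothesis Hm : is_L0module P smul.

Local Notation sc f := (smul (kc k f)).
Local Notation mble f := (measurable_fun setT f).

Lemma L0_kc (f : Om -> R) : mble f -> L0 (kc k f).
Proof. by case: k => /= mf //; split => //=; exact: measurable_cst. Qed.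

Lemma smul_ext (xi eta : Om -> Kt R k) x : xi =1 eta -> smul xi x = smul eta x.
Proof. by move=> /funext ->. Qed.

Lemma scD (f g : Om -> R) x : mble f -> mble g ->
  sc (fun w => f w + g w) x = sc f x + sc g x.
Proof.
move=> mf mg; rewrite -(sm_addl Hm); try exact: L0_kc.
by apply: smul_ext => w; rewrite /kc kofRD.
Qed.

Lemma scB (f g : Om -> R) x : mble f -> mble g ->
  sc (fun w => f w - g w) x = sc f x - sc g x.
Proof.
move=> mf mg; have mfg : mble (fun w => f w - g w) by exact: measurable_funB.
have -> : sc f x = sc (fun w => f w - g w) x + sc g x.
  by rewrite -scD //; apply: smul_ext => w; rewrite /kc subrK.
by rewrite addrK.
Qed.

Lemma scM (f g : Om -> R) x : mble f -> mble g ->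
  sc (fun w => f w * g w) x = sc f (sc g x).
Proof.
move=> mf mg; rewrite -(sm_mul Hm); try exact: L0_kc.
by apply: smul_ext => w; rewrite /kc kofRM.
Qed.

Lemma sc1 x : sc (fun _ => 1) x = x.
Proof. by rewrite -[RHS](sm_one Hm); apply: smul_ext => w; rewrite /kc kofR1. Qed.

Lemma smulB xi x y : L0 xi -> smul xi (x - y) = smul xi x - smul xi y.
Proof. by move=> Lxi; rewrite -[in smul xi x](subrK y x) (sm_addr Hm) // addrK. Qed.

Lemma smulC xi eta x : L0 xi -> L0 eta ->
  smul xi (smul eta x) = smul eta (smul xi x).
Proof.
by move=> Lxi Leta; rewrite -!(sm_mul Hm) //; apply: smul_ext => w; exact: mulrC.
Qed.

Lemma sc_indic_eq (B : set Om) (f g : Om -> R) x : measurable B -> mble f -> mble g ->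
  (forall w, B w -> f w = g w) -> sc (\1_B) (sc f x) = sc (\1_B) (sc g x).
Proof.
move=> mB mf mg fg; have mI : mble (\1_B : Om -> R) by exact: measurable_indic.
rewrite -!scM //; apply: smul_ext => w; rewrite /kc indicE.
by case: (boolP (w \in B)) => [/set_mem/fg ->|]; rewrite ?mul0r.
Qed.

Definition L0_homogeneous (N : S -> Om -> R) :=
  forall xi y, L0 xi -> ae P (fun w => N (smul xi y) w = kabs (xi w) * N y w).

Definition L0_subadditive (N : S -> Om -> R) :=
  forall y z, ae P (fun w => N (y + z) w <= N y w + N z w).

Lemma L0_homogeneous_sc N (g : Om -> R) y : L0_homogeneous N -> mble g ->
  ae P (fun w => N (sc g y) w = `|g w| * N y w).
Proof.
move=> N_hom mg; apply: (ae_mono (N_hom _ y (L0_kc mg))) => w ->.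
by rewrite /kc kabs_kofR.
Qed.

Section Norm.
Variable nrm : S -> Om -> R.
Hypothesis Hn : is_L0norm P smul nrm.

Lemma nrm_ge0 x : ae P (fun w => 0 <= nrm x w).
Proof. by case: (nrm_L0 Hn x). Qed.

Lemma nrm_mble x : mble (nrm x).
Proof. by case: (nrm_L0 Hn x). Qed.

Lemma is_L0norm_ge (N : S -> Om -> R) : (forall x, mble (N x)) ->
  L0_homogeneous N -> L0_subadditive N ->
  (forall x, ae P (fun w => nrm x w <= N x w)) -> is_L0norm P smul N.
Proof.
move=> mN N_hom N_tri le_nrm; split => // [x|x N0].
  split; first exact: mN.
  by apply: (ae_mono (ae_and (nrm_ge0 x) (le_nrm x))) => w [/le_trans]; apply.
apply: (nrm_def Hn); apply: (ae_mono (ae_and N0 (ae_and (nrm_ge0 x) (le_nrm x)))).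
by move=> w [N0w [ge0 le]]; apply/eqP; rewrite eq_le ge0 andbT -N0w.
Qed.

Lemma opnorm_bound (T : S -> S) N0 : is_opnorm P nrm T N0 ->
  forall x, ae P (fun w => nrm (T x) w <= N0 w * nrm x w).
Proof.
case=> [[mN _] N0_lb N0_glb] x.
(* Without any operator bound, [N0 + 1 <= N0] would hold vacuously. *)
have [xi [[_ xi_ge0] xi_bd]] : exists xi, is_opbound P nrm T xi.
  have [//|no_bound] := pselect (exists xi, is_opbound P nrm T xi).
  exfalso; apply: (@not_ae_False _ _ _ P).
  have mN1 : mble (fun w => N0 w + 1).
    by apply: measurable_funD => //; exact: measurable_cst.
  have N1_le xi : is_opbound P nrm T xi -> ae P (fun w => N0 w + 1 <= xi w).
    by move=> xi_bd; case: no_bound; exists xi.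
  by apply: (ae_mono (N0_glb _ mN1 N1_le)) => w; rewrite gerDl ler10.
(* [g = ||T x|| / ||x||] is a measurable minorant of every operator bound. *)
pose g w := nrm (T x) w * (nrm x w)^-1.
have mg : mble g.
  apply: measurable_funM; first exact: nrm_mble.
  by apply: measurableT_comp; [exact: measurable_inv|exact: nrm_mble].
have g_le : ae P (fun w => g w <= N0 w).
  apply: N0_glb => // eta [[_ eta_ge0] eta_bd].
  apply: (ae_mono (ae_and (nrm_ge0 x) (ae_and eta_ge0 (eta_bd x)))) => w [x0 [eta0 hb]].
  rewrite /g; have [->|nz] := eqVneq (nrm x w) 0; first by rewrite invr0 mulr0.
  by rewrite ler_pdivrMr // lt_def nz x0.
apply: (ae_mono (ae_and g_le (ae_and (nrm_ge0 x) (xi_bd x)))) => w [gN [x0 hb]].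
have [e0|nz] := eqVneq (nrm x w) 0; first by move: hb; rewrite e0 !mulr0.
by rewrite -ler_pdivrMr // lt_def nz x0.
Qed.

Lemma opnorm_bound_le (T : S -> S) N0 (M : Om -> R) : is_opnorm P nrm T N0 ->
  ae P (fun w => N0 w <= M w) -> forall x, ae P (fun w => nrm (T x) w <= M w * nrm x w).
Proof.
move=> HN0 N0M x; apply: (ae_mono (ae_and (opnorm_bound HN0 x) (ae_and N0M (nrm_ge0 x)))).
by move=> w [Tx [NM x0]]; apply: (le_trans Tx); exact: ler_wpM2r.
Qed.

End Norm.

Section Resolvent.
Variables (nrm : S -> Om -> R) (D : set S) (A : S -> S).
Hypothesis HA : is_partial_modhom smul D A.
Local Notation isR f Rx := (is_resolvent P smul nrm D A (kc k f) Rx).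

Section OneResolvent.
Context {f : Om -> R} {Rx : S -> S}.
Hypothesis HR : isR f Rx.

Lemma res_add x y : Rx (x + y) = Rx x + Rx y.
Proof. by case: HR => -[[]]. Qed.

Lemma res_smul xi x : L0 xi -> Rx (smul xi x) = smul xi (Rx x).
Proof. by case: HR => -[[_ h] _] _ _; exact: h. Qed.

Lemma res_sc g x : mble g -> Rx (sc g x) = sc g (Rx x).
Proof. by move=> mg; apply: res_smul; exact: L0_kc. Qed.

Lemma res_dom y : D (Rx y).
Proof. by case: HR => _ h _; case: (h y). Qed.

Lemma res_rinv y : sc f (Rx y) - A (Rx y) = y.
Proof. by case: HR => _ h _; case: (h y). Qed.

Lemma res_linv x : D x -> Rx (sc f x - A x) = x.
Proof. by case: HR => _ _ h; exact: h. Qed.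

Lemma iter_res_smul n xi x : L0 xi -> iter n Rx (smul xi x) = smul xi (iter n Rx x).
Proof. by move=> Lxi; elim: n => //= n ->; rewrite res_smul. Qed.

Lemma iter_res_add n x y : iter n Rx (x + y) = iter n Rx x + iter n Rx y.
Proof. by elim: n => //= n ->; rewrite res_add. Qed.

End OneResolvent.

Lemma op_sc g x : mble g -> D x -> A (sc g x) = sc g (A x).
Proof. by case: HA => _ _ _ _ h mg Dx; apply: h => //; exact: L0_kc. Qed.

Lemma dom_sc g x : mble g -> D x -> D (sc g x).
Proof. by case: HA => _ _ h _ _ mg Dx; apply: h => //; exact: L0_kc. Qed.

Lemma res_identity f1 f2 R1 R2 y : mble f1 -> mble f2 -> isR f1 R1 -> isR f2 R2 ->
  R2 y = R1 y + sc (fun w => f1 w - f2 w) (R1 (R2 y)).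
Proof.
move=> m1 m2 H1 H2; set u := R2 y.
have e : sc f1 u - A u = y + sc (fun w => f1 w - f2 w) u.
  by rewrite scB // -(res_rinv H2 y) [RHS]addrC [RHS]addrA subrK.
have := res_linv H1 (res_dom H2 y).
by rewrite e (res_add H1) (res_sc H1) //; exact: measurable_funB.
Qed.

Lemma res_local f1 f2 R1 R2 (B : set Om) x : mble f1 -> mble f2 -> measurable B ->
  (forall w, B w -> f1 w = f2 w) -> isR f1 R1 -> isR f2 R2 ->
  sc (\1_B) (R1 x) = sc (\1_B) (R2 x).
Proof.
move=> m1 m2 mB f12 H1 H2.
have mI : mble (\1_B : Om -> R) by exact: measurable_indic.
set u := R1 x; have Du : D u := res_dom H1 x.
have : sc f2 (sc (\1_B) u) - A (sc (\1_B) u) = sc (\1_B) x.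
  rewrite op_sc // (smulC u (L0_kc m2) (L0_kc mI)) -(sc_indic_eq u mB m1 m2 f12).
  by rewrite -smulB ?(res_rinv H1) //; exact: L0_kc.
by move/(congr1 R2); rewrite (res_linv H2) ?(res_sc H2) //; exact: dom_sc.
Qed.

Lemma res_convex (mu : R) Rmu l Rl y : mu != 0 -> mble l ->
  isR (fun _ => mu) Rmu -> isR l Rl ->
  sc l (Rl y) = sc (fun w => l w / mu) (sc (fun _ => mu) (Rmu y))
    + sc (fun w => 1 - l w / mu) (sc (fun _ => mu) (Rmu (sc l (Rl y)))).
Proof.
move=> mu0 ml HRmu Hl; have mc (c : R) : mble (fun _ : Om => c) by exact: measurable_cst.
have mlmu : mble (fun w => l w / mu) by exact: measurable_funM.
have m1lmu : mble (fun w => 1 - l w / mu) by exact: measurable_funB.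
have mmul : mble (fun w => mu - l w) by exact: measurable_funB.
rewrite {1}(res_identity y (mc mu) ml HRmu Hl) (sm_addr Hm); last exact: L0_kc.
rewrite (res_sc HRmu) // -!scM //; try exact: measurable_funM.
congr (_ + _); apply: smul_ext => w; rewrite /kc; congr kofR.
  by rewrite divfK.
by rewrite mulrBl mul1r divfK // mulrC.
Qed.

Section Pazy.
Variable N : S -> Om -> R.
Hypotheses (N_hom : L0_homogeneous N) (N_tri : L0_subadditive N).
Variables (mu : R) (Rmu : S -> S).
Hypotheses (mu_gt0 : 0 < mu) (HRmu : isR (fun _ => mu) Rmu).
Hypothesis N_contr : forall y, ae P (fun w => N (sc (fun _ => mu) (Rmu y)) w <= N y w).

Lemma res_contr_le (l : Om -> R) Rl y : mble l -> ae P (fun w => 0 < l w) ->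
  (forall w, l w <= mu) -> isR l Rl -> ae P (fun w => N (sc l (Rl y)) w <= N y w).
Proof.
move=> ml l_gt0 l_le Hl; set z := sc l (Rl y).
have mu0 : mu != 0 by rewrite gt_eqF.
have mc (c : R) : mble (fun _ : Om => c) by exact: measurable_cst.
have mt : mble (fun w => l w / mu) by exact: measurable_funM.
have m1t : mble (fun w => 1 - l w / mu) by exact: measurable_funB.
have := N_tri (sc (fun w => l w / mu) (sc (fun _ => mu) (Rmu y)))
   (sc (fun w => 1 - l w / mu) (sc (fun _ => mu) (Rmu z))).
rewrite -(res_convex y mu0 ml HRmu Hl) -/z => Nz_le.
apply: (ae_mono (ae_and Nz_le
  (ae_and (L0_homogeneous_sc (sc (fun=> mu) (Rmu y)) N_hom mt)
  (ae_and (L0_homogeneous_sc (sc (fun=> mu) (Rmu z)) N_hom m1t) (ae_and (N_contr y)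
  (ae_and (N_contr z) l_gt0)))))) => w [Nzw [e1 [e2 [a_le [b_le lw0]]]]].
have t_gt0 : 0 < l w / mu by rewrite divr_gt0.
have t_le1 : l w / mu <= 1 by rewrite ler_pdivrMr // mul1r.
(* [N z <= t N (mu R(mu) y) + (1 - t) N (mu R(mu) z) <= t N y + (1 - t) N z]
   with [t = l / mu > 0]. *)
move: Nzw; rewrite e1 e2 (ger0_norm (ltW t_gt0)) ger0_norm ?subr_ge0 //.
move: a_le b_le t_gt0 t_le1; set t := l w / mu.
set a := N (sc _ (Rmu y)) w; set b := N (sc _ (Rmu z)) w; nra.
Qed.

Lemma res_contr_iter (l : Om -> R) Rl n y : mble l -> ae P (fun w => 0 < l w) ->
  (forall w, l w <= mu) -> isR l Rl ->
  ae P (fun w => N (sc (fun w => l w ^+ n) (iter n Rl y)) w <= N y w).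
Proof.
move=> ml l_gt0 l_le Hl; elim: n y => [|n IH] y.
  have -> : sc (fun w => l w ^+ 0) (iter 0 Rl y) = y.
    by rewrite -[RHS]sc1; apply: smul_ext => w; rewrite /kc expr0.
  by apply: (ae_of_all P).
have -> : sc (fun w => l w ^+ n.+1) (iter n.+1 Rl y) =
          sc l (Rl (sc (fun w => l w ^+ n) (iter n Rl y))).
  have mX : mble (fun w => l w ^+ n) by exact: measurable_funX.
  rewrite (res_sc Hl) // -scM //.
  by apply: smul_ext => w; rewrite /kc exprS.
apply: (ae_mono (ae_and (res_contr_le _ ml l_gt0 l_le Hl) (IH y))) => w [].
exact: le_trans.
Qed.

End Pazy.
End Resolvent.
End Module.

Section Suprema.
Context (R : realType).

Definition is_sup (u : nat -> R) (s : R) :=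
  (forall i, u i <= s) /\ (forall c, (forall i, u i <= c) -> s <= c).

Lemma is_sup_unique u s t : is_sup u s -> is_sup u t -> s = t.
Proof. by move=> [us s_lub] [ut t_lub]; apply/le_anti; rewrite s_lub ?t_lub. Qed.

Lemma is_sup_scale a u s : 0 <= a -> is_sup u s -> is_sup (fun i => a * u i) (a * s).
Proof.
move=> a0 [us s_lub]; split=> [i|c ac]; first by rewrite ler_wpM2l.
have [a_eq0|a_neq0] := eqVneq a 0; first by move: (ac 0%N); rewrite a_eq0 !mul0r.
have a_gt0 : 0 < a by rewrite lt_def a_neq0 a0.
by rewrite -ler_pdivlMl //; apply: s_lub => i; rewrite ler_pdivlMl.
Qed.

End Suprema.

Section CappedSup.
Context (R : realType) (d : measure_display) (Om : measurableType d).
Local Notation mble f := (measurable_fun setT f).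

(* The cap [B] makes every range bounded, so that the supremum is measurable. *)
Definition capped_sup (f : nat -> Om -> R) (B : Om -> R) (w : Om) : R :=
  sup (range (fun i => Num.min (f i w) (B w))).

Lemma measurable_capped_sup f B : (forall i, mble (f i)) -> mble B ->
  mble (capped_sup f B).
Proof.
move=> mf mB.
have := @measurable_fun_sups _ _ R setT (fun i w => Num.min (f i w) (B w)) 0%N.
have -> : (fun w => sups ((fun i w => Num.min (f i w) (B w)) ^~ w) 0%N) = capped_sup f B.
  apply/funext => w; rewrite /sups /capped_sup /=; congr sup.
  by apply/seteqP; split => _ [i _ <-]; exists i.
apply; last by move=> i; exact: measurable_minr.
by move=> w _; exists (B w) => _ [i _ <-]; rewrite ge_min lexx orbT.
Qed.

Lemma capped_sup_is_sup f B w : (forall i, f i w <= B w) ->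
  is_sup (fun i => f i w) (capped_sup f B w).
Proof.
move=> fB; rewrite /capped_sup.
have -> : (fun i => Num.min (f i w) (B w)) = (fun i => f i w).
  by apply/funext => i; rewrite min_l.
split=> [i|c fc]; first by apply: ub_le_sup; [exists (B w) => _ [j _ <-]|exists i].
by apply: ge_sup; [exists (f 0%N w), 0%N|move=> _ [i _ <-]].
Qed.

End CappedSup.

Section SupSeminorm.
Context (R : realType) (k : kind) (d : measure_display) (Om : measurableType d)
  (P : probability Om R) (S : zmodType) (smul : (Om -> Kt R k) -> S -> S).
Variables (F : nat -> S -> Om -> R) (N : S -> Om -> R).
Hypothesis N_sup : forall y, ae P (fun w => is_sup (fun i => F i y w) (N y w)).

Lemma L0_homogeneous_sup : (forall i, L0_homogeneous P smul (F i)) ->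
  L0_homogeneous P smul N.
Proof.
move=> F_hom xi y Lxi; apply: (ae_mono (ae_and (ae_forall_nat (fun i => F_hom i xi y Lxi))
  (ae_and (N_sup (smul xi y)) (N_sup y)))) => w [Fe [sup_xy sup_y]].
apply: (is_sup_unique sup_xy).
have -> : (fun i => F i (smul xi y) w) = (fun i => kabs (xi w) * F i y w).
  by apply/funext => i; exact: Fe.
exact: (is_sup_scale (kabs_ge0 (xi w)) sup_y).
Qed.

Lemma L0_subadditive_sup : (forall i, L0_subadditive P (F i)) -> L0_subadditive P N.
Proof.
move=> F_tri y z; apply: (ae_mono (ae_and (ae_forall_nat (fun i => F_tri i y z))
  (ae_and (N_sup (y + z)) (ae_and (N_sup y) (N_sup z))))).
move=> w [Ft [[_ lub] [[uy _] [uz _]]]].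
by apply: lub => i; apply: (le_trans (Ft i)); exact: lerD.
Qed.

End SupSeminorm.

Section Renorming.
Context (R : realType) (k : kind) (d : measure_display) (Om : measurableType d)
  (P : probability Om R) (S : zmodType) (smul : (Om -> Kt R k) -> S -> S)
  (nrm : S -> Om -> R) (D : set S) (A : S -> S).
Hypotheses (Hm : is_L0module P smul) (Hn : is_L0norm P smul nrm)
  (HA : is_partial_modhom smul D A).
Local Notation sc f := (smul (kc k f)).
Local Notation mble f := (measurable_fun setT f).
Local Notation isR f Rx := (is_resolvent P smul nrm D A (kc k f) Rx).
Local Notation mu m := (m.+1%:R : R).

Variables (M : Om -> R) (Rm : nat -> S -> S).
Hypothesis mM : mble M.
Hypothesis Hres : forall xi, L0pp P xi -> exists Rx, isR xi Rx.
Hypothesis HRm : forall m, isR (fun _ => mu m) (Rm m).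

Definition Tpow m n y := sc (fun _ => mu m ^+ n) (iter n (Rm m) y).

Hypothesis Tpow_le : forall m n y, ae P (fun w => nrm (Tpow m n y) w <= M w * nrm y w).

Lemma Tpow0 m y : Tpow m 0 y = y.
Proof. by rewrite /Tpow /= -[RHS](sc1 Hm); apply: smul_ext => w; rewrite /kc expr0. Qed.

Lemma Tpow_smul m n xi y : L0 xi -> Tpow m n (smul xi y) = smul xi (Tpow m n y).
Proof.
move=> Lxi; rewrite /Tpow (iter_res_smul (HRm m)) // (smulC Hm) //.
by apply: L0_kc; exact: measurable_cst.
Qed.

Lemma Tpow_add m n y z : Tpow m n (y + z) = Tpow m n y + Tpow m n z.
Proof.
rewrite /Tpow (iter_res_add (HRm m)) (sm_addr Hm) //.
by apply: L0_kc; exact: measurable_cst.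
Qed.

Lemma Tpow_succ m n y : Tpow m n (sc (fun _ => mu m) (Rm m y)) = Tpow m n.+1 y.
Proof.
have mc (c : R) : mble (fun _ : Om => c) by exact: measurable_cst.
rewrite /Tpow (iter_res_smul (HRm m)); last exact: L0_kc.
rewrite -(scM Hm) // -iterSr.
by apply: smul_ext => w; rewrite /kc exprSr.
Qed.

Definition cap y w := `|M w| * `|nrm y w|.
Definition level_norm m y := capped_sup (fun n => nrm (Tpow m n y)) (cap y).
Definition renorm y := capped_sup (fun m => level_norm m y) (cap y).

Lemma measurable_cap y : mble (cap y).
Proof.
by apply: measurable_funM; apply: measurableT_comp => //; exact: (nrm_mble Hn).
Qed.

Lemma le_cap y w a : a <= M w * nrm y w -> a <= cap y w.
Proof. by move=> h; apply: (le_trans h); rewrite /cap -normrM ler_norm. Qed.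

Lemma level_norm_is_sup m y :
  ae P (fun w => is_sup (fun n => nrm (Tpow m n y) w) (level_norm m y w)).
Proof.
apply: (ae_mono (ae_forall_nat (fun n => Tpow_le m n y))) => w Tle.
by apply: capped_sup_is_sup => n; exact: le_cap.
Qed.

Lemma measurable_level_norm m y : mble (level_norm m y).
Proof.
by apply: measurable_capped_sup => [n|]; [exact: (nrm_mble Hn)|exact: measurable_cap].
Qed.

Lemma level_norm_hom m : L0_homogeneous P smul (level_norm m).
Proof.
apply: (L0_homogeneous_sup (level_norm_is_sup m)) => n xi y Lxi.
by rewrite Tpow_smul //; exact: (nrm_hom Hn).
Qed.

Lemma level_norm_tri m : L0_subadditive P (level_norm m).
Proof.
apply: (L0_subadditive_sup (level_norm_is_sup m)) => n y z.
by rewrite Tpow_add; exact: (nrm_tri Hn).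
Qed.

Lemma level_norm_ge m y : ae P (fun w => nrm y w <= level_norm m y w).
Proof.
by apply: (ae_mono (level_norm_is_sup m y)) => w [ub _]; rewrite -{1}(Tpow0 m y).
Qed.

Lemma level_norm_le m y : ae P (fun w => level_norm m y w <= M w * nrm y w).
Proof.
apply: (ae_mono (ae_and (level_norm_is_sup m y)
  (ae_forall_nat (fun n => Tpow_le m n y)))).
by move=> w [[_ lub] Tle]; exact: lub.
Qed.

Lemma level_norm_contr m y :
  ae P (fun w => level_norm m (sc (fun _ => mu m) (Rm m y)) w <= level_norm m y w).
Proof.
apply: (ae_mono (ae_and (level_norm_is_sup m (sc (fun _ => mu m) (Rm m y)))
  (level_norm_is_sup m y))) => w [[_ lub] [ub _]].
by apply: lub => n; rewrite Tpow_succ.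
Qed.

Lemma level_norm_res_contr_le j (l : Om -> R) Rl y : mble l ->
  ae P (fun w => 0 < l w) -> (forall w, l w <= mu j) -> isR l Rl ->
  ae P (fun w => level_norm j (sc l (Rl y)) w <= level_norm j y w).
Proof.
exact: (res_contr_le Hm (level_norm_hom j) (level_norm_tri j) (ltr0Sn _ _) (HRm j)
  (level_norm_contr j)).
Qed.

Lemma level_norm_mono m j y : (m <= j)%N ->
  ae P (fun w => level_norm m y w <= level_norm j y w).
Proof.
move=> mj; have mc : mble (fun _ : Om => mu m) by exact: measurable_cst.
have mu_le (w : Om) : mu m <= mu j by rewrite ler_nat ltnS.
have mu_gt0 : ae P (fun _ => 0 < mu m) by apply: (ae_of_all P) => w; exact: ltr0Sn.
have Tpow_contr n := res_contr_iter Hm (level_norm_hom j) (level_norm_tri j)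
  (ltr0Sn _ _) (HRm j) (level_norm_contr j) n y mc mu_gt0 mu_le (HRm m).
apply: (ae_mono (ae_and (ae_forall_nat (fun n => level_norm_ge j (Tpow m n y)))
  (ae_and (ae_forall_nat Tpow_contr) (level_norm_is_sup m y)))) => w [ge [contr [_ lub]]].
by apply: lub => n; exact: (le_trans (ge n) (contr n)).
Qed.

(* On [B = {xi <= mu j}] the resolvent at [xi] agrees with the resolvent at
   [min xi (mu j)], to which [level_norm_res_contr_le] applies. *)
Lemma level_norm_res_contr j (xi : Om -> R) Rx x : mble xi ->
  ae P (fun w => 0 < xi w) -> isR xi Rx ->
  ae P (fun w => xi w <= mu j -> level_norm j (sc xi (Rx x)) w <= level_norm j x w).
Proof.
move=> mxi xi_gt0 HR; pose l w := Num.min (xi w) (mu j).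
have ml : mble l by apply: measurable_minr => //; exact: measurable_cst.
have l_gt0 : ae P (fun w => 0 < l w).
  by apply: (ae_mono xi_gt0) => w xw; rewrite lt_min xw ltr0Sn.
have l_le w : l w <= mu j by rewrite ge_min lexx orbT.
have [Rl Hl] : exists Rl, isR l Rl by exact: Hres.
pose B := [set w | xi w <= mu j]; have mB : measurable B by exact: measurable_le_set.
have mI : mble (\1_B : Om -> R) by exact: measurable_indic.
have xi_l w : B w -> xi w = l w by move=> Bw; rewrite /l min_l.
have loc : sc (\1_B) (sc xi (Rx x)) = sc (\1_B) (sc l (Rl x)).
  rewrite (sc_indic_eq Hm _ mB mxi ml xi_l).
  have lI := smulC Hm _ (L0_kc ml) (L0_kc mI).
  rewrite -[LHS]lI -[RHS]lI.
  by rewrite (res_local Hm HA x mxi ml mB xi_l HR Hl).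
apply: (ae_mono (ae_and (L0_homogeneous_sc (sc xi (Rx x)) (level_norm_hom j) mI)
  (ae_and (L0_homogeneous_sc (sc l (Rl x)) (level_norm_hom j) mI)
  (level_norm_res_contr_le x ml l_gt0 l_le Hl)))) => w [e_xi [e_l le_l]] Bw.
move: e_xi e_l; rewrite loc indicE mem_set // normr1 !mul1r => e_xi e_l.
by rewrite -e_xi e_l.
Qed.

Lemma renorm_is_sup y : ae P (fun w => is_sup (fun m => level_norm m y w) (renorm y w)).
Proof.
apply: (ae_mono (ae_forall_nat (fun m => level_norm_le m y))) => w le_M.
by apply: capped_sup_is_sup => m; exact: le_cap.
Qed.

Lemma measurable_renorm y : mble (renorm y).
Proof.
apply: measurable_capped_sup => [m|].
  exact: measurable_level_norm.
exact: measurable_cap.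
Qed.

Lemma renorm_bounds y : ae P (fun w => nrm y w <= renorm y w <= M w * nrm y w).
Proof.
apply: (ae_mono (ae_and (renorm_is_sup y) (ae_and (level_norm_ge 0 y)
  (ae_forall_nat (fun m => level_norm_le m y))))) => w [[ub lub] [ge le]].
by rewrite (le_trans ge (ub 0%N)) lub.
Qed.

Lemma renorm_L0norm : is_L0norm P smul renorm.
Proof.
apply: (is_L0norm_ge Hn measurable_renorm).
- exact: (L0_homogeneous_sup renorm_is_sup level_norm_hom).
- exact: (L0_subadditive_sup renorm_is_sup level_norm_tri).
- by move=> y; apply: (ae_mono (renorm_bounds y)) => w /andP[].
Qed.

Lemma renorm_res_contr (xi : Om -> R) Rx x : L0pp P xi -> isR xi Rx ->
  ae P (fun w => renorm (sc xi (Rx x)) w <= renorm x w).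
Proof.
move=> [mxi xi_gt0] HR; set z := sc xi (Rx x).
have mono m j : ae P (fun w => (m <= j)%N -> level_norm m z w <= level_norm j z w).
  have [mj|_] := leqP m j; first by apply: (ae_mono (level_norm_mono z mj)).
  exact: (ae_of_all P).
apply: (ae_mono (ae_and (ae_forall_nat (fun j => level_norm_res_contr j x mxi xi_gt0 HR))
  (ae_and (ae_forall_nat (fun m => ae_forall_nat (mono m)))
  (ae_and (renorm_is_sup z) (renorm_is_sup x))))) => w [contr [mon [[_ lub] [ub _]]]].
apply: lub => m; pose j := maxn m (Num.truncn (xi w)).
have xi_le : xi w <= mu j.
  by apply/ltW/(lt_le_trans (truncnS_gt _)); rewrite ler_nat ltnS leq_maxr.
by apply: (le_trans (mon m j (leq_maxl _ _))); apply: (le_trans (contr j xi_le)).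
Qed.

End Renorming.

Theorem lemma4p8 (R : realType) (k : kind) (d : measure_display)
  (Om : measurableType d) (P : probability Om R)
  (S : zmodType) (smul : (Om -> Kt R k) -> S -> S) (nrm : S -> Om -> R)
  (D : set S) (A : S -> S) (M : Om -> R) :
  is_RN_module P smul nrm ->
  el_complete P nrm ->
  is_partial_modhom smul D A ->
  (forall xi : Om -> R, L0pp P xi ->
     exists Rx, is_resolvent P smul nrm D A (kc k xi) Rx) ->
  L0plus P M -> ae P (fun w => 1 <= M w) ->
  (forall (xi : Om -> R) (Rx : S -> S) (n : nat), L0pp P xi ->
     is_resolvent P smul nrm D A (kc k xi) Rx ->
     exists N, is_opnorm P nrm
                 (fun x => smul (kc k (fun w => xi w ^+ n)) (iter n Rx x)) N
               /\ ae P (fun w => N w <= M w)) ->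
  exists nrm2 : S -> Om -> R,
    [/\ is_L0norm P smul nrm2,
        equiv_norms P nrm nrm2,
        (forall x, ae P (fun w => nrm x w <= nrm2 x w <= M w * nrm x w)) &
        (forall (xi : Om -> R) (Rx : S -> S) (x : S), L0pp P xi ->
           is_resolvent P smul nrm D A (kc k xi) Rx ->
           ae P (fun w => nrm2 (smul (kc k xi) (Rx x)) w <= nrm2 x w))].
Proof.
move=> [Hm Hn] _ HA Hres [mM _] _ Hop.
have mu_L0pp m : L0pp P (fun _ : Om => m.+1%:R).
  by split; [exact: measurable_cst|apply: (ae_of_all P) => w; exact: ltr0Sn].
have [Rm HRm] := choice (fun m => Hres _ (mu_L0pp m)).
have Tpow_le m n y : ae P (fun w => nrm (Tpow smul Rm m n y) w <= M w * nrm y w).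
  have [N [HN NM]] := Hop _ _ n (mu_L0pp m) (HRm m).
  exact: (opnorm_bound_le Hn HN NM y).
exists (renorm smul nrm M Rm); split.
- exact: (renorm_L0norm Hm Hn mM HRm Tpow_le).
- apply: (equiv_norms_le_mul (nrm_mble Hn) (measurable_renorm Hn Rm mM) mM (nrm_ge0 Hn)).
  exact: (renorm_bounds Hm Tpow_le).
- exact: (renorm_bounds Hm Tpow_le).
- by move=> xi Rx x Hxi HR; exact: (renorm_res_contr Hm Hn HA Hres HRm Tpow_le x Hxi HR).
Qed.
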